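(* Let $(S,|\cdot|)$ be a finite metric space with $n$ points, $t\ge1$, $G'=(S,E')$ a $t$-spanner for $S$, $f$ an integer with $1\le f\le (n-1)/2$, and $G=(S,E)$ the graph obtained from $G'$ by the construction in the context. Let $F\subseteq E$ be such that $(S,F)$ has maximum degree at most $f$. Let $p,q$ be distinct points of $S$ and let $P'$ be a shortest path between $p$ and $q$ in $G'$. If $P'$ has at least $2f+2$ vertices, then $\delta_{G\setminus F}(p,q)\le (8f+2)\,|P'|$, where $|P'|$ is the length of $P'$.
   Context: All graphs on $S$ have edge weights $|pq|$; the length of a path is the sum of its edge weights and $\delta_X(p,q)$ is the shortest-path distance in $X$. A graph $G'=(S,E')$ is a $t$-spanner for $S$ if $\delta_{G'}(p,q)\le t|pq|$ for all $p,q$. $G\setminus F$ is the graph with vertex set $S$ and edge set $E\setminus F$. Construction: for each edge $\{a,b\}\in E'$, list the points of $S\setminus\{a,b\}$ as $c_1,\dots,c_{n-2}$ in non-decreasing order of $|ac_i|+|c_ib|$ (ties broken arbitrarily) and let $C_{ab}=\{c_1,\dots,c_{2f-1}\}$. The graph $G=(S,E)$ has edge set $E=E'\cup\{\{a,c\},\{c,b\}:\{a,b\}\in E',\ c\in C_{ab}\}$. *)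

From mathcomp Require Import all_boot all_order all_algebra.
Set Implicit Arguments. Unset Strict Implicit. Unset Printing Implicit Defensive.
Import Order.TTheory GRing.Theory Num.Theory.
Local Open Scope ring_scope.

Section Defs.
Variables (R : realFieldType) (S : finType).

Definition is_metric (d : S -> S -> R) : Prop :=
  (forall x y, d x y = 0 <-> x = y) /\
  (forall x y, d x y = d y x) /\
  (forall x y z, d x z <= d x y + d y z).

Definition is_edge_set (E : {set {set S}}) : Prop :=
  forall e, e \in E -> #|e| = 2%N.

Definition is_walk (E : {set {set S}}) (p : S) (s : seq S) : bool :=
  path (fun x y => [set x; y] \in E) p s.

Definition plen (d : S -> S -> R) (p : S) (s : seq S) : R :=
  \sum_(w <- pairmap d p s) w.

Definition is_spanner (d : S -> S -> R) (E' : {set {set S}}) (t : R) : Prop :=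
  forall p q, exists s, [/\ is_walk E' p s, last p s = q & plen d p s <= t * d p q].

Definition is_shortest_path (d : S -> S -> R) (E : {set {set S}}) (p q : S)
    (s : seq S) : Prop :=
  [/\ is_walk E p s, last p s = q &
      forall s', is_walk E p s' -> last p s' = q -> plen d p s <= plen d p s'].

(* ord e is a listing c_1,...,c_{n-2} of S \ {a,b} (e = {a,b}) in
   non-decreasing order of |ac| + |cb|, ties broken arbitrarily. *)
Definition valid_order (d : S -> S -> R) (e : {set S}) (o : seq S) : Prop :=
  forall a b, a != b -> e = [set a; b] ->
    perm_eq o (enum (~: e)) /\
    sorted (fun x y => d a x + d x b <= d a y + d y b) o.

Definition Cset (ord : {set S} -> seq S) (f : nat) (e : {set S}) : seq S :=
  take (2 * f - 1) (ord e).

Definition construct (ord : {set S} -> seq S) (f : nat) (E' : {set {set S}})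
    : {set {set S}} :=
  E' :|: \bigcup_(e in E') [set [set x; c] | x in e, c in Cset ord f e].

Definition max_deg_le (F : {set {set S}}) (f : nat) : Prop :=
  forall v : S, (#|[set e in F | v \in e]| <= f)%N.

End Defs.

From mathcomp Require Import all_boot all_order all_algebra.
From mathcomp Require Import zify lra.
Set Implicit Arguments. Unset Strict Implicit. Unset Printing Implicit Defensive.
Import Order.TTheory GRing.Theory Num.Theory.

(* Let v_0 = p, ..., v_k = q be the vertices of P'. Since P' is a shortest
   path it is simple. Write B_i for the total length of the edges of P' whose
   index is within 2f of i. Each edge {v_i, v_{i+1}} of P' can be replaced by
   a path of length at most 2 B_i avoiding F: either the edge itself, or a
   detour v_i, c, v_{i+1} through some c in C_{v_i v_{i+1}}. Indeed at least
   2f - 1 vertices v_m of P' other than v_i, v_{i+1} have index within 2f of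
   i, and each satisfies |v_i v_m| + |v_m v_{i+1}| <= 2 B_i; as C is a prefix
   of the sorted order, every c in C satisfies the same bound. If the edge is
   in F, each endpoint has at most f - 1 further F-edges into C, so one of the
   2f - 1 detours avoids F. Finally each edge of P' occurs in at most 4f + 1
   of the sums B_i, so the detours add up to at most (8f + 2) |P'|. *)

Definition window_idx (L k i : nat) : seq nat :=
  iota (i - L) (i - (i - L)) ++ iota i.+2 (minn k (i + 1 + L) - i.+1).

Lemma mem_window_idx L k i m : (i < k)%N -> m \in window_idx L k i ->
  [/\ (i <= m + L)%N, (m <= i + L + 1)%N, (m <= k)%N, m != i & m != i.+1].
Proof. by move=> ik; rewrite mem_cat !mem_iota => /orP[] /andP[]; split; lia. Qed.

Lemma uniq_window_idx L k i : uniq (window_idx L k i).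
Proof.
rewrite cat_uniq !iota_uniq andbT /=; apply/hasPn => m.
by rewrite !mem_iota => /andP[m_ge _]; apply/negP => /andP[_ m_lt]; lia.
Qed.

Lemma size_window_idx L k i : (i < k)%N -> (L + 1 <= k)%N ->
  (L <= size (window_idx L k i))%N.
Proof. by rewrite size_cat !size_iota; lia. Qed.

Lemma count_near_le L j k :
  (\sum_(0 <= i < k) ((i <= j + L) && (j <= i + L) : nat) <= L.*2.+1)%N.
Proof.
suff : (\sum_(0 <= i < k) ((i <= j + L) && (j <= i + L) : nat)
         <= minn k (j + L + 1) - (j - L))%N by lia.
elim: k => [|k IHk]; first by rewrite big_geq.
by rewrite big_nat_recr //=; case: andP => [[? ?]|?]; lia.
Qed.

Local Open Scope ring_scope.

Lemma sorted_take_ub (R : realFieldType) (T : eqType) (g : T -> R) (B : R)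
    (s W : seq T) n :
  sorted (fun x y => g x <= g y) s -> uniq W -> {subset W <= s} ->
  (forall x, x \in W -> g x <= B) -> (n <= size W)%N ->
  forall x, x \in take n s -> g x <= B.
Proof.
move=> s_sorted W_uniq W_s W_le n_le x /(nthP x)[j].
rewrite size_take_min => j_lt; have j_lt_n : (j < n)%N by lia.
have j_lt_s : (j < size s)%N by lia.
rewrite nth_take // => <-; rewrite leNgt; apply/negP => B_lt.
suff W_take : {subset W <= take j s}.
  by have := uniq_leq_size W_uniq W_take; rewrite size_take_min; lia.
move=> y y_W; have /(nthP x)[j' j'_lt y_def] := W_s y y_W; subst y.
case: (leqP j j') => jj'.
  have le_g := sorted_leq_nth (fun a b c => @le_trans _ _ (g a) (g b) (g c))
    (fun x => lexx (g x)) x s_sorted.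
  by have := le_g j j' j_lt_s j'_lt jj'; have := W_le _ y_W; lra.
by rewrite -(nth_take x jj'); apply: mem_nth; rewrite size_take_min; lia.
Qed.

Section Metric.
Variables (R : realFieldType) (S : finType) (d : S -> S -> R).
Hypothesis d_metric : is_metric d.

Lemma dist_xx x : d x x = 0.
Proof. by case: d_metric => [d0 _]; apply/d0. Qed.

Lemma distC x y : d x y = d y x.
Proof. by case: d_metric => [_ []]. Qed.

Lemma dist_triangle x y z : d x z <= d x y + d y z.
Proof. by case: d_metric => [_ [_]]. Qed.

Lemma dist_ge0 x y : 0 <= d x y.
Proof. by have := dist_triangle x y x; rewrite dist_xx (distC y x); lra. Qed.

Lemma dist_gt0 x y : x != y -> 0 < d x y.
Proof.
move=> xy; rewrite lt_def dist_ge0 andbT; apply: contra xy => /eqP dxy.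
by case: d_metric => [d0 _]; rewrite (d0 x y).1.
Qed.

Lemma plen_nil p : plen d p [::] = 0.
Proof. by rewrite /plen big_nil. Qed.

Lemma plen_cons p x s : plen d p (x :: s) = d p x + plen d x s.
Proof. by rewrite /plen big_cons. Qed.

Lemma plen_cat p s1 s2 :
  plen d p (s1 ++ s2) = plen d p s1 + plen d (last p s1) s2.
Proof.
elim: s1 p => [|x s1 IHs] p /=; first by rewrite plen_nil add0r.
by rewrite !plen_cons IHs addrA.
Qed.

Lemma plen_ge0 p s : 0 <= plen d p s.
Proof.
elim: s p => [|x s IHs] p; first by rewrite plen_nil.
by rewrite plen_cons addr_ge0 ?dist_ge0.
Qed.

Lemma edge_set_neq (E : {set {set S}}) x y :
  is_edge_set E -> [set x; y] \in E -> x != y.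
Proof. by move=> E2 /E2; rewrite cards2; case: eqP. Qed.

Lemma walk_shortcut_loop (E : {set {set S}}) p s :
  is_edge_set E -> is_walk E p s -> p \in s ->
  exists s2, [/\ is_walk E p s2, last p s2 = last p s & plen d p s2 < plen d p s].
Proof.
move=> E2 w_ps /splitPr p_s; move: w_ps; case: p_s => s1 s2.
rewrite /is_walk cat_path /= => /and3P[w1 e w2].
exists s2; split => //; first by rewrite last_cat.
rewrite plen_cat plen_cons; case: s1 w1 e => [|y s1] /=.
  by move=> _ /E2; rewrite setUid cards1.
move=> /andP[/edge_set_neq py _] _; rewrite plen_cons.
have := dist_gt0 (py E2); have := plen_ge0 y s1; have := plen_ge0 p s2.
by have := dist_ge0 (last y s1) p; lra.
Qed.

Lemma walk_shortcut (E : {set {set S}}) p s :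
  is_edge_set E -> is_walk E p s -> ~~ uniq (p :: s) ->
  exists s2, [/\ is_walk E p s2, last p s2 = last p s & plen d p s2 < plen d p s].
Proof.
move=> E2; elim: s p => [|x s IHs] p // w_ps.
rewrite cons_uniq negb_and negbK => /orP[p_s|]; first exact: walk_shortcut_loop.
move: w_ps; rewrite /is_walk /= => /andP[px w_xs] /(IHs x w_xs)[s2 [w2 l2 lt2]].
by exists (x :: s2); rewrite /is_walk /= px !plen_cons ltrD2l.
Qed.

Lemma shortest_path_uniq (E : {set {set S}}) p q s :
  is_edge_set E -> is_shortest_path d E p q s -> uniq (p :: s).
Proof.
move=> E2 [w_ps l_ps min_ps]; apply: contraT => /(walk_shortcut E2 w_ps).
by case=> s2 [w2 l2 lt2]; have := min_ps s2 w2 (etrans l2 l_ps); lra.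
Qed.

Definition vtx (p : S) (s : seq S) (m : nat) : S := nth p (p :: s) m.

Definition edge_len (p : S) (s : seq S) (j : nat) : R :=
  d (vtx p s j) (vtx p s j.+1).

Definition window_len (p : S) (s : seq S) (L i : nat) : R :=
  \sum_(0 <= j < size s | (i <= j + L)%N && (j <= i + L)%N) edge_len p s j.

Lemma plen_edge_len p s : plen d p s = \sum_(0 <= j < size s) edge_len p s j.
Proof.
rewrite /edge_len /vtx; elim: s p => [|x s IHs] p; first by rewrite plen_nil big_geq.
rewrite plen_cons big_nat_recl // IHs; congr (_ + _).
by apply: eq_big_nat => j /andP[_ j_lt]; rewrite !(set_nth_default p x) //= ltnS ltnW.
Qed.

Lemma dist_vtx_le_sum p s m m' : (m <= m')%N -> (m' <= size s)%N ->
  d (vtx p s m) (vtx p s m') <= \sum_(m <= j < m') edge_len p s j.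
Proof.
elim: m' => [|m' IHm] mm' m's.
  by move: mm'; rewrite leqn0 => /eqP->; rewrite dist_xx big_geq.
have [->|mm] := eqVneq m m'.+1; first by rewrite dist_xx big_geq.
have mm1 : (m <= m')%N by lia.
rewrite big_nat_recr //=; have := IHm mm1 (ltnW m's).
have := dist_triangle (vtx p s m) (vtx p s m') (vtx p s m'.+1).
by rewrite /edge_len; lra.
Qed.

Lemma dist_vtx_le_window p s L i m m' :
  (m <= size s)%N -> (i <= m + L)%N -> (m <= i + L + 1)%N ->
  (m' <= size s)%N -> (i <= m' + L)%N -> (m' <= i + L + 1)%N ->
  d (vtx p s m) (vtx p s m') <= window_len p s L i.
Proof.
wlog mm' : m m' / (m <= m')%N => [W|ms im mi m's im' m'i].
  move=> *; case: (leqP m m') => ?; first exact: W.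
  by rewrite distC; apply: W => //; lia.
apply: le_trans (dist_vtx_le_sum p mm' m's) _.
rewrite (big_nat_widenl _ _ _ _ _ (leq0n m)) (big_nat_widen _ _ _ _ _ m's).
rewrite /window_len big_mkcond [X in _ <= X]big_mkcond; apply: ler_sum => j _ /=.
case: ifP => [/andP[mj jm']|_]; first by rewrite ifT //; lia.
by case: ifP => _; rewrite ?dist_ge0.
Qed.

Lemma sum_window_len_le p s L :
  \sum_(0 <= i < size s) window_len p s L i <= (L.*2.+1)%:R * plen d p s.
Proof.
rewrite plen_edge_len mulr_sumr /window_len.
under eq_bigr do rewrite big_mkcond /=.
rewrite exchange_big_nat /=; apply: ler_sum_nat => j _.
rewrite (eq_bigr (fun i => edge_len p s j *+ ((i <= j + L) && (j <= i + L))%N));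
  last by move=> i _; case: ifP.
by rewrite sumrMnr mulr_natl ler_wpMn2l ?dist_ge0 ?count_near_le.
Qed.

Lemma walk_concat (E : {set {set S}}) p s (c : nat -> R) :
  (forall i, (i < size s)%N -> exists w, [/\ is_walk E (vtx p s i) w,
     last (vtx p s i) w = vtx p s i.+1 & plen d (vtx p s i) w <= c i]) ->
  exists w, [/\ is_walk E p w, last p w = last p s &
                plen d p w <= \sum_(0 <= i < size s) c i].
Proof.
move=> steps; suff /(_ (size s) (leqnn _)) : forall j, (j <= size s)%N ->
    exists w, [/\ is_walk E p w, last p w = vtx p s j &
                  plen d p w <= \sum_(0 <= i < j) c i].
  by rewrite /vtx nth_last.
elim=> [|j IHj] js; first by exists [::]; rewrite plen_nil big_geq.
have [w [w_w w_last w_len]] := IHj (ltnW js).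
have [w2 [w_w2 w2_last w2_len]] := steps j js.
exists (w ++ w2); split; last by rewrite plen_cat w_last big_nat_recr //=; lra.
  by move: w_w w_w2; rewrite /is_walk cat_path w_last => -> ->.
by rewrite last_cat w_last.
Qed.

End Metric.

Lemma card_apex_in_F_le (S : finType) (F : {set {set S}}) f (x y : S) (C : seq S) :
  max_deg_le F f -> x != y -> [set x; y] \in F -> x \notin C -> y \notin C ->
  (#|[set c in C | [set x; c] \in F]| <= f - 1)%N.
Proof.
move=> degF xy xyF xC yC; set B := [set c in C | _].
have apex_inj : {in B &, injective (fun c => [set x; c])}.
  move=> c c'; rewrite inE => /andP[cC _] _ cc'.
  have : c \in [set x; c'] by rewrite -cc' set22.
  by rewrite in_set2 => /orP[/eqP cx|/eqP //]; move: xC; rewrite -cx cC.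
have apex_sub : [set [set x; c] | c in B] \subset [set e in F | x \in e] :\ [set x; y].
  apply/subsetP => z /imsetP[c]; rewrite inE => /andP[cC xcF] ->.
  rewrite !inE xcF eqxx /= andbT; apply: contra yC => /eqP xc_xy.
  have : y \in [set x; c] by rewrite xc_xy set22.
  by rewrite in_set2 eq_sym (negbTE xy) => /eqP->.
rewrite -(card_in_imset apex_inj); apply: leq_trans (subset_leq_card apex_sub) _.
have := degF x; rewrite (cardsD1 [set x; y]) inE xyF set21 /= add1n.
by move/(leq_sub2r 1); rewrite subn1; apply.
Qed.

Lemma free_apex (S : finType) (F : {set {set S}}) f (a b : S) (C : seq S) :
  max_deg_le F f -> (1 <= f)%N -> a != b -> [set a; b] \in F ->
  a \notin C -> b \notin C -> uniq C -> size C = (2 * f - 1)%N ->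
  exists2 c, c \in C & ([set a; c] \notin F) && ([set b; c] \notin F).
Proof.
move=> degF f_gt0 ab abF aC bC C_uniq C_size; apply/hasP; apply: contraT.
move=> /hasPn all_bad; have : [set c in C] \subset
    [set c in C | [set a; c] \in F] :|: [set c in C | [set b; c] \in F].
  apply/subsetP => c; rewrite !inE => cC; rewrite cC /=.
  by move: (all_bad c cC); rewrite negb_and !negbK.
move/subset_leq_card/leq_trans/(_ (leq_card_setU _ _)).
rewrite cardsE (card_uniqP C_uniq) C_size.
have := card_apex_in_F_le degF ab abF aC bC.
have := card_apex_in_F_le degF (_ : b != a) (_ : [set b; a] \in F) bC aC.
by rewrite eq_sym setUC; move=> /(_ ab abF); lia.
Qed.

Lemma apex_in_construct (S : finType) (ord : {set S} -> seq S) f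
    (E' : {set {set S}}) (e : {set S}) (x c : S) :
  e \in E' -> x \in e -> c \in Cset ord f e -> [set x; c] \in construct ord f E'.
Proof.
move=> eE' xe cC; rewrite /construct inE; apply/orP; right.
by apply/bigcupP; exists e => //; apply/imset2P; exists x c.
Qed.

Section Detour.
Variables (R : realFieldType) (S : finType) (d : S -> S -> R).
Variables (E' : {set {set S}}) (f : nat) (ord : {set S} -> seq S).
Variables (F : {set {set S}}) (p : S) (s : seq S).
Hypotheses (d_metric : is_metric d) (E'2 : is_edge_set E').
Hypotheses (f_gt0 : (1 <= f)%N) (S_large : (2 * f + 1 <= #|S|)%N).
Hypothesis ord_valid : forall e, e \in E' -> valid_order d e (ord e).
Hypothesis degF : max_deg_le F f.
Hypotheses (ps_walk : is_walk E' p s) (ps_uniq : uniq (p :: s)).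
Hypothesis s_long : (2 * f + 1 <= size s)%N.

Local Notation v := (vtx p s).
Local Notation B := (window_len d p s (2 * f)).

Lemma vtx_inj m m' : (m <= size s)%N -> (m' <= size s)%N -> v m = v m' -> m = m'.
Proof. by move=> ms m's /eqP; rewrite /vtx nth_uniq //= => /eqP. Qed.

Lemma path_edge i : (i < size s)%N -> [set v i; v i.+1] \in E'.
Proof. by move=> i_lt; move/(pathP p): ps_walk => /(_ i i_lt). Qed.

Lemma Cset_path_edge i (C := Cset ord f [set v i; v i.+1]) : (i < size s)%N ->
  [/\ v i \notin C, v i.+1 \notin C, uniq C & size C = (2 * f - 1)%N].
Proof.
move=> i_lt; have e_E' := path_edge i_lt; have ab := edge_set_neq E'2 e_E'.
have [ord_perm _] := ord_valid e_E' ab erefl.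
have notin_C x : x \in [set v i; v i.+1] -> x \notin C.
  by apply: contraL => /mem_take; rewrite (perm_mem ord_perm) mem_enum inE.
split; [apply: notin_C; exact: set21 | apply: notin_C; exact: set22 | |].
  by apply: take_uniq; rewrite (perm_uniq ord_perm) enum_uniq.
rewrite size_takel // (perm_size ord_perm) -cardE.
by have := cardsC [set v i; v i.+1]; rewrite cards2 ab; lia.
Qed.

Lemma apex_cost_le i c : (i < size s)%N -> c \in Cset ord f [set v i; v i.+1] ->
  d (v i) c + d c (v i.+1) <= B i *+ 2.
Proof.
move=> i_lt; have e_E' := path_edge i_lt; have ab := edge_set_neq E'2 e_E'.
have [ord_perm ord_sorted] := ord_valid e_E' ab erefl.
pose W := map v (window_idx (2 * f) (size s) i).
apply: (sorted_take_ub ord_sorted (W := W)).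
- rewrite map_inj_in_uniq ?uniq_window_idx // => m m'.
  move=> /(mem_window_idx i_lt)[_ _ ms _ _] /(mem_window_idx i_lt)[_ _ m's _ _].
  exact: vtx_inj.
- move=> _ /mapP[m /(mem_window_idx i_lt)[_ _ ms mi mi1] ->].
  rewrite (perm_mem ord_perm) mem_enum !inE.
  apply/norP; split; [apply: contra mi | apply: contra mi1] => /eqP.
    by move/(vtx_inj ms (ltnW i_lt))->.
  by move/(vtx_inj ms i_lt)->.
- move=> _ /mapP[m /(mem_window_idx i_lt)[im mi ms _ _] ->].
  by rewrite mulr2n lerD // dist_vtx_le_window //; lia.
- by rewrite size_map; have := @size_window_idx (2 * f) _ _ i_lt; lia.
Qed.

Lemma edge_detour i : (i < size s)%N ->
  exists w, [/\ is_walk (construct ord f E' :\: F) (v i) w,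
                last (v i) w = v i.+1 & plen d (v i) w <= B i *+ 2].
Proof.
move=> i_lt; have e_E' := path_edge i_lt; have ab := edge_set_neq E'2 e_E'.
have edge_le : d (v i) (v i.+1) <= B i by apply: dist_vtx_le_window => //; lia.
have [eF|eNF] := boolP ([set v i; v i.+1] \in F); last first.
  exists [:: v i.+1]; rewrite /is_walk /= !inE eNF e_E' plen_cons plen_nil.
  by split => //; have := dist_ge0 d_metric (v i) (v i.+1); rewrite mulr2n; lra.
have [aC bC C_uniq C_size] := Cset_path_edge i_lt.
have [c cC /andP[acF bcF]] := free_apex degF f_gt0 ab eF aC bC C_uniq C_size.
exists [:: c; v i.+1]; split => //; last first.
  by rewrite !plen_cons plen_nil addr0 apex_cost_le.
rewrite /is_walk /= !in_setD [[set c; _]]setUC acF bcF.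
by rewrite !(apex_in_construct e_E') ?set21 ?set22.
Qed.

End Detour.

Theorem lemma5 (R : realFieldType) (S : finType) (d : S -> S -> R)
  (t : R) (E' : {set {set S}}) (f : nat) (ord : {set S} -> seq S)
  (F : {set {set S}}) (p q : S) (s' : seq S) :
  is_metric d ->
  1 <= t ->
  is_edge_set E' ->
  is_spanner d E' t ->
  (1 <= f)%N -> (2 * f + 1 <= #|S|)%N ->
  (forall e, e \in E' -> valid_order d e (ord e)) ->
  F \subset construct ord f E' ->
  max_deg_le F f ->
  p != q ->
  is_shortest_path d E' p q s' ->
  (2 * f + 2 <= size (p :: s'))%N ->
  exists s, [/\ is_walk (construct ord f E' :\: F) p s, last p s = q &
                plen d p s <= (8 * f + 2)%:R * plen d p s'].
Proof.
move=> d_metric _ E'2 _ f_gt0 S_large ord_valid _ degF _ shortest s'_long.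
have [ps_walk ps_last _] := shortest.
have ps_uniq := shortest_path_uniq d_metric E'2 shortest.
have s'_long' : (2 * f + 1 <= size s')%N by move: s'_long => /=; lia.
have [w [w_walk w_last w_len]] := walk_concat (edge_detour d_metric E'2 f_gt0
  S_large ord_valid degF ps_walk ps_uniq s'_long').
exists w; split => //; first by rewrite w_last.
apply: le_trans w_len _; rewrite sumrMnl.
apply: le_trans (ler_wMn2r 2 (sum_window_len_le d_metric p s' (2 * f))) _.
rewrite -mulrnAl -mulr_natr -natrM.
by have -> : ((2 * f).*2.+1 * 2 = 8 * f + 2)%N by lia.
Qed.
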